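(* For every $n\ge4$, the word formed by the first $F_n$ letters of $\mathcal S$ equals the word formed by the letters of $\mathcal S$ in positions $F_n+1,\dots,2F_n$.
   Context: Fibonacci numbers: $F_1=F_2=1$, $F_{n+1}=F_n+F_{n-1}$ for $n\ge2$. Golden string: define finite words over $\{A,B\}$ by $S_1=B$, $S_2=BA$, $S_n=S_{n-1}:S_{n-2}$ for $n\ge3$, where $:$ denotes concatenation; each $S_n$ is a prefix of $S_{n+1}$, and $\mathcal S$ is the infinite word having every $S_n$ as a prefix ($\mathcal S=BABBABABBABB\ldots$). Letters of $\mathcal S$ are indexed starting at $1$. *)

From mathcomp Require Import all_boot.
Set Implicit Arguments. Unset Strict Implicit. Unset Printing Implicit Defensive.

Inductive letter := A | B.

Fixpoint fib (n : nat) : nat :=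
  match n with
  | 0 => 0
  | 1 => 1
  | (m.+1 as p).+1 => fib p + fib m
  end.

(* Golden words: S 1 = B, S 2 = BA, S n = S (n-1) ++ S (n-2) for n >= 3.
   (S 0 is an unused filler value.) *)
Fixpoint golden_word (n : nat) : seq letter :=
  match n with
  | 0 => [:: A]
  | 1 => [:: B]
  | 2 => [:: B; A]
  | (m.+1 as p).+1 => golden_word p ++ golden_word m
  end.

(* s : nat -> letter (1-indexed) is the infinite golden string: every S_n
   (n >= 1) is a prefix of it. *)
Definition is_golden_string (s : nat -> letter) : Prop :=
  forall n, 1 <= n -> forall i, i < size (golden_word n) ->
    s i.+1 = nth A (golden_word n) i.

(* Writing W := S_(n-1), so that |W| = F_n, and S_(n+1) = S_n S_(n-1) = S_(n-1) S_(n-2) S_(n-1)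
   = W S_(n-2) S_(n-2) S_(n-3), while W W = W S_(n-2) S_(n-3).  Since S_(n-3) is a prefix of
   S_(n-2) as soon as n >= 4, the square W W is a prefix of S_(n+1), hence of the golden
   string, and its two halves give the two equal blocks of length F_n. *)

From HB Require Import structures.
From mathcomp Require Import all_boot.

Set Implicit Arguments.
Unset Strict Implicit.
Unset Printing Implicit Defensive.

Lemma letter_comparable : comparable letter.
Proof. by do 2 case; [left | right | right | left]. Qed.

HB.instance Definition _ := comparableMixin letter_comparable.

Lemma golden_wordS n : golden_word n.+3 = golden_word n.+2 ++ golden_word n.+1.
Proof. by []. Qed.

Lemma size_golden_word n : size (golden_word n.+1) = fib n.+2.
Proof.
suff [] : size (golden_word n.+1) = fib n.+2 /\ size (golden_word n.+2) = fib n.+3 by [].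
elim: n => [//|n [IH1 IH2]]; split=> //.
by rewrite golden_wordS size_cat IH1 IH2.
Qed.

Lemma prefix_golden_wordS n : prefix (golden_word n.+1) (golden_word n.+2).
Proof. by case: n => [|n]; rewrite ?golden_wordS ?prefix_prefix. Qed.

Lemma prefix_golden_square n : 2 < n ->
  prefix (golden_word n ++ golden_word n) (golden_word n.+2).
Proof.
case: n => [|[|[|n]]] // _; rewrite !golden_wordS -!catA !prefix_catr ?eqxx //=.
exact: prefix_catl (prefix_golden_wordS n).
Qed.

Lemma golden_string_prefix s (hs : is_golden_string s) n u :
  0 < n -> prefix u (golden_word n) -> forall i, i < size u -> s i.+1 = nth A u i.
Proof.
move=> n_gt0 /prefixP[v def_n] i lt_i_u.
by rewrite (hs n n_gt0) def_n ?nth_cat ?lt_i_u // size_cat ltn_addr.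
Qed.

Theorem proposition2p1 (s : nat -> letter) (hs : is_golden_string s) :
  forall n, 4 <= n -> forall i, 1 <= i <= fib n -> s i = s (fib n + i).
Proof.
move=> [|[|[|[|k]]]] // _ [//|j] /andP[_ lt_j_fib].
set W := golden_word k.+3.
have size_W : size W = fib k.+4 := size_golden_word k.+2.
have read := golden_string_prefix hs (ltn0Sn _) (prefix_golden_square (isT : 2 < k.+3)).
have lt_j_WW : j < size (W ++ W) by rewrite size_cat size_W ltn_addr.
have lt_Fj_WW : fib k.+4 + j < size (W ++ W) by rewrite size_cat size_W ltn_add2l.
by rewrite addnS (read _ lt_j_WW) (read _ lt_Fj_WW)
  nth_cat size_W lt_j_fib nth_cat size_W ltnNge leq_addr addKn.
Qed.
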